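(* Let $(V,E,\sigma)$ be an influence graph and let $\mu : V \rightarrow \{+,-\}$ be a (partial) vertex labeling. If $(V,E,\sigma)$ and $\mu$ are consistent, then the disjunctive logic program $P_C\cup\tau((V,E,\sigma),\mu)$ has an answer set.
   Context: An influence graph is a triple $(V,E,\sigma)$ where $V$ is a finite set of vertices, $E\subseteq V\times V$ is a set of directed edges (an edge from $j$ to $i$ is written $j\rightarrow i$), and $\sigma : E\rightarrow\{+,-\}$ is a partial labeling of the edges; in addition, some vertices of $V$ are designated as input vertices. Signs are multiplied as numbers ($++=--=+$, $+-=-+=-$). Given a partial vertex labeling $\mu: V\rightarrow\{+,-\}$, the pair $(V,E,\sigma)$ and $\mu$ are called consistent if there exist total extensions $\sigma':E\rightarrow\{+,-\}$ of $\sigma$ and $\mu':V\rightarrow\{+,-\}$ of $\mu$ such that for every non-input vertex $i\in V$ there is an edge $j\rightarrow i$ in $E$ with $\mu'(i)=\mu'(j)\sigma'(j,i)$. Answer set semantics: a disjunctive logic program is a set of rules $a_1;\dots;a_l \leftarrow b_1,\dots,b_m,\mathit{not}\ c_1,\dots,\mathit{not}\ c_n$ (with $l=0$ giving an integrity constraint, whose empty head is false). Rules with (capitalized) variables stand for all their ground instances obtained by substituting constants occurring in the program; a built-in comparison $S\neq T$ in a body keeps only instances where the substituted constants differ. For a set $X$ of ground atoms, the reduct $P^X$ consists of $\{a_1,\dots,a_l\}\leftarrow b_1,\dots,b_m$ for each ground rule with $\{c_1,\dots,c_n\}\cap X=\emptyset$; $X$ is an answer set of $P$ if it is a $\subseteq$-minimal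 model of $P^X$ (a rule is satisfied if some head atom is in $X$ whenever all $b_k$ are in $X$). Here $+$ and $-$ are constants and vertex names are constants. The instance $\tau((V,E,\sigma),\mu)$ is the set of facts: $\mathit{vertex}(i)$ for each $i\in V$; $\mathit{edge}(j,i)$ for each $j\rightarrow i$ in $E$; $\mathit{observedE}(j,i,s)$ whenever $\sigma(j,i)=s$ is defined; $\mathit{observedV}(i,s)$ whenever $\mu(i)=s$ is defined; $\mathit{input}(i)$ for each input vertex $i$. The program $P_C$ consists of the rules $\mathit{labelV}(V,+);\mathit{labelV}(V,-)\leftarrow \mathit{vertex}(V)$; $\mathit{labelE}(U,V,+);\mathit{labelE}(U,V,-)\leftarrow \mathit{edge}(U,V)$; $\mathit{labelV}(V,S)\leftarrow \mathit{observedV}(V,S)$; $\mathit{labelE}(U,V,S)\leftarrow \mathit{observedE}(U,V,S)$; $\mathit{receive}(V,+)\leftarrow \mathit{labelE}(U,V,S),\mathit{labelV}(U,S)$; $\mathit{receive}(V,-)\leftarrow \mathit{labelE}(U,V,S),\mathit{labelV}(U,T),S\neq T$; $\leftarrow \mathit{labelV}(V,S),\mathit{not}\ \mathit{receive}(V,S),\mathit{not}\ \mathit{input}(V)$. *)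

From mathcomp Require Import all_boot.
Set Implicit Arguments. Unset Strict Implicit. Unset Printing Implicit Defensive.

Inductive sign := Pos | Neg.

Definition smul (a b : sign) : sign :=
  match a, b with
  | Pos, Pos | Neg, Neg => Pos
  | _, _ => Neg
  end.

(* An influence graph on the finite vertex type V: edges E (E j i means j -> i),
   partial edge labeling sigma (None = undefined), input vertices [input]. *)
Definition consistent (V : finType) (E : rel V) (sigma : V -> V -> option sign)
    (input : pred V) (mu : V -> option sign) : Prop :=
  exists (sigma' : V -> V -> sign) (mu' : V -> sign),
    (forall j i s, E j i -> sigma j i = Some s -> sigma' j i = s) /\
    (forall i s, mu i = Some s -> mu' i = s) /\
    (forall i, ~~ input i -> exists2 j, E j i & mu' i = smul (mu' j) (sigma' j i)).

Fixpoint lIn (A : Type) (a : A) (l : list A) : Prop :=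
  match l with nil => False | b :: l' => b = a \/ lIn a l' end.

(* ground rule  h_1;...;h_l <- b_1,...,b_m, not c_1,...,not c_n *)
Record grule (A : Type) := GRule { head : list A; pos : list A; neg : list A }.

(* Y is a model of the reduct P^X (P a set of ground rules, sets of atoms as
   predicates). *)
Definition model_of_reduct (A : Type) (P : grule A -> Prop) (X Y : A -> Prop) : Prop :=
  forall r, P r -> (forall c, lIn c (neg r) -> ~ X c) ->
    (forall b, lIn b (pos r) -> Y b) -> exists2 a, lIn a (head r) & Y a.

Definition answer_set (A : Type) (P : grule A -> Prop) (X : A -> Prop) : Prop :=
  model_of_reduct P X X /\
  (forall Y : A -> Prop, (forall a, Y a -> X a) -> model_of_reduct P X Y ->
     forall a, X a -> Y a).

Inductive const (V : Type) := CV of V | CS of sign.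
Arguments CS {V}.

Inductive atom (V : Type) :=
  | vertex of const V
  | edge of const V & const V
  | observedE of const V & const V & const V
  | observedV of const V & const V
  | input of const V
  | labelV of const V & const V
  | labelE of const V & const V & const V
  | receive of const V & const V.

Definition plus {V : Type} : const V := CS Pos.
Definition minus {V : Type} : const V := CS Neg.

(* Ground instances of the rules of P_C (variables range over all constants). *)
Definition P_C (V : Type) (r : grule (atom V)) : Prop :=
  (exists v, r = GRule [:: labelV v plus; labelV v minus] [:: vertex v] [::])
  \/ (exists u v, r = GRule [:: labelE u v plus; labelE u v minus] [:: edge u v] [::])
  \/ (exists v s, r = GRule [:: labelV v s] [:: observedV v s] [::])
  \/ (exists u v s, r = GRule [:: labelE u v s] [:: observedE u v s] [::])
  \/ (exists u v s, r = GRule [:: receive v plus] [:: labelE u v s; labelV u s] [::])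
  \/ (exists u v s t, s <> t /\
        r = GRule [:: receive v minus] [:: labelE u v s; labelV u t] [::])
  \/ (exists v s, r = GRule [::] [:: labelV v s] [:: receive v s; input v]).

Definition tau_fact (V : finType) (E : rel V) (sigma : V -> V -> option sign)
    (inp : pred V) (mu : V -> option sign) (a : atom V) : Prop :=
  (exists i, a = vertex (CV i))
  \/ (exists j i, E j i /\ a = edge (CV j) (CV i))
  \/ (exists j i s, E j i /\ sigma j i = Some s /\ a = observedE (CV j) (CV i) (CS s))
  \/ (exists i s, mu i = Some s /\ a = observedV (CV i) (CS s))
  \/ (exists i, inp i /\ a = input (CV i)).

Definition tau (V : finType) (E : rel V) (sigma : V -> V -> option sign)
    (inp : pred V) (mu : V -> option sign) (r : grule (atom V)) : Prop :=
  exists2 a, tau_fact E sigma inp mu a & r = GRule [:: a] [::] [::].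

Definition PC_tau (V : finType) (E : rel V) (sigma : V -> V -> option sign)
    (inp : pred V) (mu : V -> option sign) (r : grule (atom V)) : Prop :=
  P_C r \/ tau E sigma inp mu r.

(* The answer set is read off the total labelings mu', sigma' witnessing consistency:
   the facts of tau, the atoms labelV(i, mu' i) and labelE(j, i, sigma' j i), and every
   receive(i, mu' j sigma' j i) along an edge j -> i.  Each rule of P_C is then a closure
   property of this set, the integrity constraint holding because every non-input vertex
   has a witnessing in-edge.  For minimality, the reduct keeps all positive rules, and a
   model of it inside the set is forced to contain each chosen label because the set holds
   only one label per vertex and per edge. *)
From mathcomp Require Import all_boot.

Set Implicit Arguments. Unset Strict Implicit. Unset Printing Implicit Defensive.

Lemma smul_diag (a : sign) : smul a a = Pos.
Proof. by case: a. Qed.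

Lemma smul_neq (a b : sign) : a <> b -> smul a b = Neg.
Proof. by case: a; case: b. Qed.

Lemma model_of_reduct_positive (A : Type) (P : grule A -> Prop) (X Y : A -> Prop)
    (h b : list A) :
  model_of_reduct P X Y -> P (GRule h b [::]) ->
  (forall c, lIn c b -> Y c) -> exists2 a, lIn a h & Y a.
Proof. by move=> HY Hr; apply: HY Hr _ => c []. Qed.

Lemma model_of_reduct_fact (A : Type) (P : grule A -> Prop) (X Y : A -> Prop) (a : A) :
  model_of_reduct P X Y -> P (GRule [:: a] [::] [::]) -> Y a.
Proof.
move=> HY Hr.
by have [|a' [<-|[]]] // := model_of_reduct_positive HY Hr; move=> c [].
Qed.

Section Candidate.

Variables (V : finType) (E : rel V) (sigma : V -> V -> option sign)
  (inp : pred V) (mu : V -> option sign).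
Variables (sigma' : V -> V -> sign) (mu' : V -> sign).
Hypothesis sigma'_ext : forall j i s, E j i -> sigma j i = Some s -> sigma' j i = s.
Hypothesis mu'_ext : forall i s, mu i = Some s -> mu' i = s.
Hypothesis mu'_supported :
  forall i, ~~ inp i -> exists2 j, E j i & mu' i = smul (mu' j) (sigma' j i).

Inductive candidate : atom V -> Prop :=
  | cand_vertex i : candidate (vertex (CV i))
  | cand_edge j i : E j i -> candidate (edge (CV j) (CV i))
  | cand_observedE j i s :
      E j i -> sigma j i = Some s -> candidate (observedE (CV j) (CV i) (CS s))
  | cand_observedV i s : mu i = Some s -> candidate (observedV (CV i) (CS s))
  | cand_input i : inp i -> candidate (input (CV i))
  | cand_labelV i : candidate (labelV (CV i) (CS (mu' i)))
  | cand_labelE j i : E j i -> candidate (labelE (CV j) (CV i) (CS (sigma' j i)))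
  | cand_receive j i :
      E j i -> candidate (receive (CV i) (CS (smul (mu' j) (sigma' j i)))).

Lemma tau_fact_candidate (a : atom V) : tau_fact E sigma inp mu a -> candidate a.
Proof.
case=> [[i ->]|[[j [i [Eji ->]]]|[[j [i [s [Eji [Hs ->]]]]]|[[i [s [Hs ->]]]|[i [Hi ->]]]]]];
  by constructor.
Qed.

Lemma candidate_vertexP (v : const V) : candidate (vertex v) -> exists i, v = CV i.
Proof. by inversion 1; repeat eexists. Qed.

Lemma candidate_edgeP (u v : const V) :
  candidate (edge u v) -> exists j i, [/\ E j i, u = CV j & v = CV i].
Proof. by inversion 1; repeat eexists. Qed.

Lemma candidate_observedVP (v s : const V) :
  candidate (observedV v s) -> exists i s', [/\ mu i = Some s', v = CV i & s = CS s'].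
Proof. by inversion 1; repeat eexists. Qed.

Lemma candidate_observedEP (u v s : const V) :
  candidate (observedE u v s) ->
  exists j i s', [/\ E j i, sigma j i = Some s', u = CV j, v = CV i & s = CS s'].
Proof. by inversion 1; repeat eexists. Qed.

Lemma candidate_labelVP (v s : const V) :
  candidate (labelV v s) -> exists i, v = CV i /\ s = CS (mu' i).
Proof. by inversion 1; repeat eexists. Qed.

Lemma candidate_labelEP (u v s : const V) :
  candidate (labelE u v s) ->
  exists j i, [/\ E j i, u = CV j, v = CV i & s = CS (sigma' j i)].
Proof. by inversion 1; repeat eexists. Qed.

Lemma candidate_labelV_choice (v : const V) :
  candidate (vertex v) -> exists2 a, lIn a [:: labelV v plus; labelV v minus] & candidate a.
Proof.
move=> /candidate_vertexP [i ->]; exists (labelV (CV i) (CS (mu' i))); last exact: cand_labelV.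
by case: (mu' i); [left | right; left].
Qed.

Lemma candidate_labelE_choice (u v : const V) :
  candidate (edge u v) ->
  exists2 a, lIn a [:: labelE u v plus; labelE u v minus] & candidate a.
Proof.
move=> /candidate_edgeP [j [i [Eji -> ->]]].
exists (labelE (CV j) (CV i) (CS (sigma' j i))); last exact: cand_labelE.
by case: (sigma' j i); [left | right; left].
Qed.

Lemma candidate_observedV (v s : const V) :
  candidate (observedV v s) -> candidate (labelV v s).
Proof.
by move=> /candidate_observedVP [i [s' [/mu'_ext Hs -> ->]]]; rewrite -Hs; apply: cand_labelV.
Qed.

Lemma candidate_observedE (u v s : const V) :
  candidate (observedE u v s) -> candidate (labelE u v s).
Proof.
move=> /candidate_observedEP [j [i [s' [Eji /(sigma'_ext Eji) Hs -> -> ->]]]].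
by rewrite -Hs; apply: cand_labelE.
Qed.

Lemma candidate_receive_plus (u v s : const V) :
  candidate (labelE u v s) -> candidate (labelV u s) -> candidate (receive v plus).
Proof.
move=> /candidate_labelEP [j [i [Eji -> -> ->]]] /candidate_labelVP [j' [[<-] [Hs]]].
by have := cand_receive Eji; rewrite Hs smul_diag.
Qed.

Lemma candidate_receive_minus (u v s t : const V) :
  s <> t -> candidate (labelE u v s) -> candidate (labelV u t) -> candidate (receive v minus).
Proof.
move=> Hst /candidate_labelEP [j [i [Eji -> -> Hs]]] /candidate_labelVP [j' [[<-] Ht]].
subst s t.
have Hneq : mu' j <> sigma' j i by move=> Heq; apply: Hst; rewrite Heq.
by have := cand_receive Eji; rewrite smul_neq.
Qed.

Lemma candidate_labelV_supported (v s : const V) :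
  candidate (labelV v s) -> candidate (receive v s) \/ candidate (input v).
Proof.
move=> /candidate_labelVP [i [-> ->]].
case Hi: (inp i); first by right; apply: cand_input.
have [j Eji ->] := mu'_supported (negbT Hi).
by left; apply: cand_receive.
Qed.

Lemma candidate_model : model_of_reduct (PC_tau E sigma inp mu) candidate candidate.
Proof.
have lIn_first (b : atom V) s : lIn b (b :: s) := or_introl erefl.
have lIn_second (b b' : atom V) s : lIn b' (b :: b' :: s) := or_intror (or_introl erefl).
move=> r [HP|[a Ha ->]]; last by exists a; [left | apply: tau_fact_candidate].
case: HP => [[v ->]|[[u [v ->]]|[[v [s ->]]|[[u [v [s ->]]]|[[u [v [s ->]]]|
  [[u [v [s [t [Hst ->]]]]]|[v [s ->]]]]]]]] Hneg Hpos.
- exact: candidate_labelV_choice (Hpos _ (lIn_first _ _)).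
- exact: candidate_labelE_choice (Hpos _ (lIn_first _ _)).
- by exists (labelV v s); [left | apply: candidate_observedV (Hpos _ (lIn_first _ _))].
- by exists (labelE u v s); [left | apply: candidate_observedE (Hpos _ (lIn_first _ _))].
- exists (receive v plus); first by left.
  exact: candidate_receive_plus (Hpos _ (lIn_first _ _)) (Hpos _ (lIn_second _ _ _)).
- exists (receive v minus); first by left.
  exact: candidate_receive_minus Hst (Hpos _ (lIn_first _ _)) (Hpos _ (lIn_second _ _ _)).
- case: (candidate_labelV_supported (Hpos _ (lIn_first _ _))) => H.
  + by case: (Hneg _ (lIn_first _ _) H).
  + by case: (Hneg _ (lIn_second _ _ _) H).
Qed.

Section Minimality.

Variable Y : atom V -> Prop.
Hypothesis Y_sub : forall a, Y a -> candidate a.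
Hypothesis Y_model : model_of_reduct (PC_tau E sigma inp mu) candidate Y.

Lemma reduct_model_fact (a : atom V) : tau_fact E sigma inp mu a -> Y a.
Proof. by move=> Ha; apply: model_of_reduct_fact Y_model _; right; exists a. Qed.

Lemma reduct_model_labelV (i : V) : Y (labelV (CV i) (CS (mu' i))).
Proof.
have [a Ha Ya] : exists2 a, lIn a [:: labelV (CV i) plus; labelV (CV i) minus] & Y a.
  apply: model_of_reduct_positive Y_model _ _; first by left; left; exists (CV i).
  by move=> c [<-|[]]; apply: reduct_model_fact; left; exists i.
have [s Hs] : exists s, a = labelV (CV i) (CS s) by case: Ha => [<-|[<-|[]]]; eexists.
by move: Ya (Y_sub Ya); rewrite Hs => Ya /candidate_labelVP [i' [[<-] [<-]]].
Qed.

Lemma reduct_model_labelE (j i : V) : E j i -> Y (labelE (CV j) (CV i) (CS (sigma' j i))).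
Proof.
move=> Eji.
have [a Ha Ya] :
    exists2 a, lIn a [:: labelE (CV j) (CV i) plus; labelE (CV j) (CV i) minus] & Y a.
  apply: model_of_reduct_positive Y_model _ _.
    by left; right; left; exists (CV j), (CV i).
  by move=> c [<-|[]]; apply: reduct_model_fact; right; left; exists j, i.
have [s Hs] : exists s, a = labelE (CV j) (CV i) (CS s)
  by case: Ha => [<-|[<-|[]]]; eexists.
by move: Ya (Y_sub Ya); rewrite Hs => Ya /candidate_labelEP [j' [i' [_ [<-] [<-] [<-]]]].
Qed.

Lemma reduct_model_receive (j i : V) :
  E j i -> Y (receive (CV i) (CS (smul (mu' j) (sigma' j i)))).
Proof.
move=> Eji.
have [Heq|Hneq] : sigma' j i = mu' j \/ mu' j <> sigma' j i.
  by case: (sigma' j i); case: (mu' j); [left | right | right | left].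
- rewrite Heq smul_diag.
  have [a [<-|[]] //] : exists2 a, lIn a [:: receive (CV i) plus] & Y a.
  apply: model_of_reduct_positive Y_model _ _.
    by left; do 4 right; left; exists (CV j), (CV i), (CS (mu' j)).
  move=> c [<-|[<-|[]]]; last exact: reduct_model_labelV.
  by rewrite -Heq; apply: reduct_model_labelE.
- rewrite smul_neq //.
  have [a [<-|[]] //] : exists2 a, lIn a [:: receive (CV i) minus] & Y a.
  apply: model_of_reduct_positive Y_model _ _.
    left; do 5 right; left; exists (CV j), (CV i), (CS (sigma' j i)), (CS (mu' j)).
    by split => // -[Heq]; apply: Hneq.
  by move=> c [<-|[<-|[]]]; [apply: reduct_model_labelE | apply: reduct_model_labelV].
Qed.

Lemma candidate_minimal (a : atom V) : candidate a -> Y a.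
Proof.
case: a / => [i|j i Eji|j i s Eji Hs|i s Hs|i Hi|i|j i Eji|j i Eji].
- by apply: reduct_model_fact; left; exists i.
- by apply: reduct_model_fact; right; left; exists j, i.
- by apply: reduct_model_fact; right; right; left; exists j, i, s.
- by apply: reduct_model_fact; do 3 right; left; exists i, s.
- by apply: reduct_model_fact; do 4 right; exists i.
- exact: reduct_model_labelV.
- exact: reduct_model_labelE.
- exact: reduct_model_receive.
Qed.

End Minimality.

End Candidate.

Theorem theorem2 (V : finType) (E : rel V) (sigma : V -> V -> option sign)
    (inp : pred V) (mu : V -> option sign) :
  consistent E sigma inp mu ->
  exists X : atom V -> Prop, answer_set (PC_tau E sigma inp mu) X.
Proof.
move=> [sigma' [mu' [sigma'_ext [mu'_ext mu'_supported]]]].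
exists (candidate E sigma inp mu sigma' mu'); split.
- exact: candidate_model.
- exact: candidate_minimal.
Qed.
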